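(* Let $q$ be a prime power and let $n$ be an odd positive integer coprime to $q$. The following are equivalent: (1) every monic irreducible factor of $x^{n}-1$ in $\mathbb{F}_{q^2}[x]$ is SCRIM; (2) for every prime divisor $l$ of $n$, every monic irreducible factor of $x^{l}-1$ in $\mathbb{F}_{q^2}[x]$ is SCRIM; (3) for every prime divisor $l$ of $n$, $\mathrm{ord}_l(q^2)$ is odd and $\mathrm{ord}_l(q)$ is even.
   Context: $\mathbb{F}_{q^2}$ is the finite field with $q^2$ elements. For $\alpha\in\mathbb{F}_{q^2}$ put $\bar\alpha=\alpha^q$, and for $f(x)=\sum_i f_ix^i$ put $\overline{f(x)}=\sum_i \bar f_i x^i$. For $f(x)$ with $f(0)\neq 0$, $f^*(x)=x^{\deg f}f(0)^{-1}f(1/x)$ and $f^\dagger(x)=\overline{f^*(x)}$. A polynomial is SCRIM if it is monic, irreducible over $\mathbb{F}_{q^2}$, has nonzero constant term, and satisfies $f=f^\dagger$. $\mathrm{ord}_l(a)$ denotes the multiplicative order of $a$ modulo $l$. *)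

From mathcomp Require Import all_boot all_algebra all_field.
Set Implicit Arguments. Unset Strict Implicit. Unset Printing Implicit Defensive.
Import GRing.Theory.
Local Open Scope ring_scope.

(* F is a finite field with q^2 elements; conjugation a |-> a^q. *)
Definition fconj (F : finFieldType) (q : nat) (a : F) : F := a ^+ q.

Definition pconj (F : finFieldType) (q : nat) (f : {poly F}) : {poly F} :=
  map_poly (@fconj F q) f.

(* f^*(x) = x^{deg f} f(0)^{-1} f(1/x): the reversed coefficient list,
   scaled by f(0)^{-1}.  (deg f = size f - 1.) *)
Definition pstar (F : finFieldType) (f : {poly F}) : {poly F} :=
  (f`_0)^-1 *: \poly_(i < size f) f`_((size f).-1 - i).

Definition pdagger (F : finFieldType) (q : nat) (f : {poly F}) : {poly F} :=
  pconj q (pstar f).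

Definition SCRIM (F : finFieldType) (q : nat) (f : {poly F}) : Prop :=
  [/\ f \is monic, irreducible_poly f, f`_0 != 0 & f = pdagger q f].

(* multiplicative order of a modulo l: least k >= 1 with a^k = 1 (mod l);
   (0 if none exists in 1..l, which never happens for coprime a, l >= 2) *)
Definition ordmod (l a : nat) : nat :=
  head 0%N [seq k <- iota 1 l | (a ^ k %% l == 1 %% l)%N].

Definition prime_power (q : nat) : Prop :=
  exists p k : nat, [/\ prime p, (0 < k)%N & q = (p ^ k)%N].

From mathcomp Require Import all_boot all_algebra all_field.
From mathcomp Require Import cyclic zify ring.
From Stdlib Require Import Classical.

(* Write Q = p^k, so that #|F| = Q^2, and let alpha be the class of X in
   K = F[X]/(f) for a monic irreducible f with f(0) <> 0.  The roots of f in K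
   are the Frobenius conjugates alpha^(Q^(2j)), while (y^-1)^Q is a root of
   f^dagger for every root y of f; hence f = f^dagger exactly when
   alpha^(Q^m + 1) = 1 for some odd m.  For a factor f of x^n - 1 this holds as
   soon as n divides Q^m + 1 for an odd m; conversely an irreducible factor of
   x^l - 1 other than x - 1 has a root of prime order l, so SCRIM factors force
   l | Q^m + 1.  The property "e | Q^m + 1 for some odd m" passes from l and e
   to l e when l is odd, because x^l + 1 = l (x + 1) modulo (x + 1)^2, and for
   an odd prime l it says that ord_l(Q) is twice an odd number, which is
   condition (3). *)

Set Implicit Arguments.
Unset Strict Implicit.
Unset Printing Implicit Defensive.

Import GRing.Theory.

Lemma head_filter_iota (P : pred nat) a m : has P (iota a m) ->
  let h := head 0 [seq k <- iota a m | P k] in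
  [/\ a <= h, P h & forall k, a <= k < h -> ~~ P k].
Proof.
elim: m a => [|m IHm] a //=; case: ifP => [Pa _ | nPa /IHm[le_ah Ph minh]] /=.
  by split => // k; lia.
split => //; first by lia.
move=> k /andP[le_ak lt_kh]; have [-> | ne_ka] := eqVneq k a; first by rewrite nPa.
by apply: minh; lia.
Qed.

Lemma totient_leq n : totient n <= n.
Proof.
rewrite totient_count_coprime.
apply: (@leq_trans (\sum_(0 <= d < n) 1)); first by apply: leq_sum => d _; apply: leq_b1.
by rewrite sum_nat_const_nat muln1 subn0.
Qed.

Section OrderModulo.
Variables l a : nat.
Hypotheses (l_gt0 : 0 < l) (coprime_la : coprime l a).

Lemma ordmod_spec : let t := ordmod l a in
  [/\ 0 < t, a ^ t = 1 %[mod l] & forall k, 0 < k < t -> a ^ k != 1 %[mod l]].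
Proof.
have /head_filter_iota[] : has (fun k => a ^ k == 1 %[mod l]) (iota 1 l).
  apply/hasP; exists (totient l).
    by rewrite mem_iota totient_gt0 l_gt0 add1n ltnS totient_leq.
  by apply/eqP/Euler_exp_totient; rewrite coprime_sym.
by move=> t_gt0 /eqP a_t min_t; split => // k /andP[]; apply: min_t.
Qed.

Lemma ordmodP k : (a ^ k == 1 %[mod l]) = (ordmod l a %| k).
Proof.
have [t_gt0 a_t min_t] := ordmod_spec; set t := ordmod l a in t_gt0 a_t min_t *.
have a_tk j : a ^ (j * t) = 1 %[mod l].
  by rewrite mulnC expnM -modnXm a_t modnXm exp1n.
rewrite {1}(divn_eq k t) expnD -modnMml a_tk modnMml mul1n /dvdn.
have [-> | r_gt0] := posnP (k %% t); first by rewrite expn0 eqxx.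
by rewrite (negPf (min_t _ _)) // r_gt0 ltn_pmod.
Qed.

End OrderModulo.

Lemma ordmod_sqr l a : 0 < l -> coprime l a ->
  ~~ odd (ordmod l a) -> ordmod l (a ^ 2) = (ordmod l a)./2.
Proof.
move=> l_gt0 coprime_la t_even.
have coprime_la2 : coprime l (a ^ 2) by rewrite coprimeXr.
have t_half : ordmod l a = (ordmod l a)./2.*2.
  by rewrite -[LHS]odd_double_half (negPf t_even).
apply/eqP; rewrite eqn_dvd -ordmodP // -expnM mul2n -t_half ordmodP // dvdnn /=.
rewrite -(@dvdn_pmul2r 2) // !muln2 -t_half -ordmodP // -mul2n expnM.
by rewrite ordmodP.
Qed.

Lemma prime_dvdn_expD1 l q m : prime l -> odd l -> coprime l q ->
  (l %| q ^ m + 1) = (ordmod l q %| m.*2) && ~~ (ordmod l q %| m).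
Proof.
move=> l_pr l_odd coprime_lq; have l_gt0 := prime_gt0 l_pr.
have x_gt0 : 0 < q ^ m.
  rewrite expn_gt0; case: q coprime_lq => // /eqP; rewrite gcdn0 => l1.
  by rewrite l1 in l_pr.
rewrite -!ordmodP // -muln2 expnM; set x := q ^ m in x_gt0 *.
have x2_gt0 : 0 < x ^ 2 by rewrite expn_gt0 x_gt0.
rewrite !eqn_mod_dvd // -[X in x ^ 2 - X](exp1n 2) subn_sqr Euclid_dvdM //.
have [dvd_xS | ndvd_xS] := boolP (l %| x + 1); last by rewrite orbF andbN.
rewrite orbT andTb; apply/esym; apply: contraL l_odd => dvd_xP.
have := dvdn_sub dvd_xS dvd_xP; rewrite (_ : x + 1 - (x - 1) = 2); last by lia.
by rewrite dvdn_prime2 // => /eqP->.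
Qed.

Lemma even_odd_halfP t :
  (exists2 m, odd m & (t %| m.*2) && ~~ (t %| m)) <-> ~~ odd t && odd t./2.
Proof.
have halfK : ~~ odd t -> t = t./2 * 2.
  by move=> t_even; rewrite muln2 -[LHS]odd_double_half (negPf t_even).
split => [[m m_odd /andP[dvd_t2m ndvd_tm]] | /andP[t_even half_odd]].
  have t_even : ~~ odd t.
    apply: contra ndvd_tm => t_odd.
    by rewrite -(@Gauss_dvdl t m 2) ?coprimen2 ?muln2.
  rewrite t_even; move: dvd_t2m.
  by rewrite {1}(halfK t_even) -muln2 dvdn_pmul2r // => /dvdn_odd->.
exists t./2 => //; rewrite -muln2 -halfK // dvdnn /=.
apply/negP => /(dvdn_leq (odd_gt0 half_odd)); rewrite {1}halfK //.
by have := odd_gt0 half_odd; lia.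
Qed.

Definition oddpow_neg1 (q e : nat) := exists2 m, odd m & (e %| q ^ m + 1)%N.

Lemma oddpow_neg1_ordmod l q : prime l -> odd l -> coprime l q ->
  oddpow_neg1 q l <-> odd (ordmod l (q ^ 2)) && ~~ odd (ordmod l q).
Proof.
move=> l_pr l_odd coprime_lq.
have ordmod_cond : odd (ordmod l (q ^ 2)) && ~~ odd (ordmod l q) =
    ~~ odd (ordmod l q) && odd (ordmod l q)./2.
  have [t_odd | t_even] := boolP (odd (ordmod l q)); first by rewrite andbF.
  by rewrite ordmod_sqr ?prime_gt0 // andbC.
rewrite ordmod_cond -even_odd_halfP.
split=> -[m m_odd dvd_m]; exists m => //; first by rewrite -prime_dvdn_expD1.
by rewrite prime_dvdn_expD1.
Qed.

Section IntBinomial.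
Local Open Scope ring_scope.

Lemma sqr_dvdz_expB1 (w : int) k :
  (w ^+ 2 %| (w - 1) ^+ k - (-1) ^+ k * (1 - k%:Z * w))%Z.
Proof.
elim: k => [|k IHk]; first by rewrite !expr0 mul0r subr0 mul1r subrr dvdz0.
have -> : (w - 1) ^+ k.+1 - (-1) ^+ k.+1 * (1 - k.+1%:Z * w) =
    (w - 1) * ((w - 1) ^+ k - (-1) ^+ k * (1 - k%:Z * w))
    + w ^+ 2 * ((-1) ^+ k * - k%:Z).
  by rewrite intS !exprS; ring.
by apply: rpredD; [apply: dvdz_mull | apply/dvdz_mulr/dvdzz].
Qed.

Lemma sqr_dvdz_oddXD1 (x : int) k : odd k ->
  ((x + 1) ^+ 2 %| x ^+ k + 1 - k%:Z * (x + 1))%Z.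
Proof.
move=> k_odd; have := sqr_dvdz_expB1 (x + 1) k.
rewrite -signr_odd k_odd expr1 addrK.
by congr (_ %| _)%Z; ring.
Qed.

Lemma dvdn_natz (m n : nat) : (m %| n)%N = (m%:R %| n%:R)%Z.
Proof. by rewrite !natz. Qed.

Lemma dvdn_oddXD1 x k : odd k -> (x + 1 %| x ^ k + 1)%N.
Proof.
move=> k_odd; rewrite dvdn_natz !natrD natrX.
rewrite -(subrK (k%:R * (x%:R + 1)) (_ + 1)) rpredD ?dvdz_mull //.
have := sqr_dvdz_oddXD1 x%:R k_odd; rewrite -natz; apply: dvdz_trans.
by rewrite expr2 dvdz_mull.
Qed.

Lemma muln_dvdn_oddXD1 x l e : odd l ->
  (l %| x + 1)%N -> (e %| x + 1)%N -> (l * e %| x ^ l + 1)%N.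
Proof.
rewrite !dvdn_natz !natrD natrX natrM => l_odd dvd_l dvd_e.
rewrite -(subrK (l%:R * (x%:R + 1)) (_ + 1)) rpredD ?dvdz_mul //.
have := sqr_dvdz_oddXD1 x%:R l_odd; rewrite -natz; apply: dvdz_trans.
by rewrite expr2 dvdz_mul.
Qed.

End IntBinomial.

Lemma oddpow_neg1M q l e : odd l ->
  oddpow_neg1 q l -> oddpow_neg1 q e -> oddpow_neg1 q (l * e).
Proof.
move=> l_odd [m m_odd dvd_l] [m' m'_odd dvd_e].
exists (m * m' * l)%N; first by rewrite !oddM m_odd m'_odd l_odd.
rewrite expnM; apply: muln_dvdn_oddXD1 => //.
  by apply: dvdn_trans dvd_l _; rewrite expnM dvdn_oddXD1.
by apply: dvdn_trans dvd_e _; rewrite mulnC expnM dvdn_oddXD1.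
Qed.

Lemma oddpow_neg1_primes q n : odd n ->
  (forall l, prime l -> (l %| n)%N -> oddpow_neg1 q l) -> oddpow_neg1 q n.
Proof.
elim/ltn_ind: n => n IHn n_odd oddpow_primes.
have [n_le1 | n_gt1] := leqP n 1.
  by exists 1%N => //; case: n n_le1 n_odd {IHn oddpow_primes} => [|[]].
have l_pr := pdiv_prime n_gt1; have dvd_ln := pdiv_dvd n.
rewrite -(divnK dvd_ln) mulnC.
apply: oddpow_neg1M; [exact: dvdn_odd dvd_ln n_odd | exact: oddpow_primes |].
apply: IHn.
- by rewrite ltn_Pdiv ?prime_gt1 // ltnW.
- by move: n_odd; rewrite -{1}(divnK dvd_ln) oddM => /andP[].
- move=> l l_prime dvd_l; apply: oddpow_primes => //.
  by apply: dvdn_trans dvd_l _; apply: dvdn_div.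
Qed.

Local Open Scope ring_scope.

Section IrreducibleFactors.
Variable F : fieldType.
Implicit Types f g : {poly F}.

Lemma coef0_neq0_dvdp_Xn_sub1 f n : (0 < n)%N -> f %| 'X^n - 1 -> f`_0 != 0.
Proof.
move=> n_gt0 dvd_f; apply/negP => /eqP f0_eq0.
have /(root_dvdp dvd_f) : root f 0 by rewrite rootE horner_coef0 f0_eq0.
by rewrite rootE !hornerE expr0n gtn_eqF // sub0r oppr_eq0 oner_eq0.
Qed.

Lemma dvdp_Xn_sub1 l n : (l %| n)%N -> ('X^l - 1 : {poly F}) %| 'X^n - 1.
Proof.
by case/dvdnP=> c ->; rewrite mulnC exprM -{2}(expr1n _ c) subrXX dvdp_mulIl.
Qed.

Lemma irreducible_factor_exists g : (1 < size g)%N ->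
  exists f, [/\ f \is monic, irreducible_poly f & f %| g].
Proof.
have [N] := ubnP (size g); elim: N g => // N IHN g /ltnSE size_le g_gt1.
have [g_irr | g_red] := classic (irreducible_poly g).
  have lc_neq0 : (lead_coef g)^-1 != 0 by rewrite invr_eq0 lead_coef_eq0 irredp_neq0.
  exists ((lead_coef g)^-1 *: g); rewrite dvdpZl //; split => //.
    by rewrite monicE lead_coefZ mulrC divff // lead_coef_eq0 irredp_neq0.
  split=> [|h size_h]; first by rewrite size_scale.
  rewrite dvdpZr // => /(g_irr _ size_h) h_eqp.
  by rewrite (eqp_trans h_eqp) // eqp_sym eqp_scale.
have [h [size_h dvd_hg h_neqp]] :
    exists h : {poly F}, [/\ size h != 1%N, h %| g & ~ h %= g].
  apply: NNPP => no_h; apply: g_red; split => // h size_h dvd_hg.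
  by apply: NNPP => h_neqp; apply: no_h; exists h.
have g_neq0 : g != 0 by rewrite -size_poly_gt0 ltnW.
have h_neq0 : h != 0.
  by apply: contra_neq g_neq0 => h0; move: dvd_hg; rewrite h0 dvd0p => /eqP.
have size_hg : (size h < size g)%N.
  by rewrite ltn_neqAle dvdp_leq // andbT (dvdp_size_eqp dvd_hg); apply/negP.
have [|f [f_monic f_irr dvd_fh]] := IHN h (leq_trans size_hg size_le).
  by move: size_h h_neq0; rewrite -size_poly_eq0; case: (size h) => [|[]].
by exists f; split => //; apply: dvdp_trans dvd_hg.
Qed.

Lemma Xn_sub1_factor_not_root1 l : (1 < l)%N -> l%:R != 0 :> F ->
  exists f, [/\ f \is monic, irreducible_poly f, f %| 'X^l - 1 & ~~ root f 1].
Proof.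
move=> l_gt1 l_neq0; pose h : {poly F} := \sum_(i < l) 'X^(l.-1 - i).
have Xl_sub1 : 'X^l - 1 = ('X - 1) * h.
  by rewrite -[X in _ - X = _](expr1n _ l) subrXX; under eq_bigr do rewrite expr1n mulr1.
have h1 : h.[1] = l%:R.
  rewrite horner_sum; under eq_bigr do rewrite hornerXn expr1n.
  by rewrite sumr_const card_ord.
have h_neq0 : h != 0 by apply: contra_neq l_neq0 => h0; rewrite -h1 h0 horner0.
have size_h : (1 < size h)%N.
  have : size ('X^l - 1%:P : {poly F}) = l.+1 by rewrite size_XnsubC // ltnW.
  rewrite polyC1 Xl_sub1 -[in 'X - 1]polyC1 size_mul ?polyXsubC_eq0 // size_XsubC.
  by move=> size_eq; rewrite -ltnS -[(size h).+1]/((2 + size h).-1) size_eq ltnS.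
have [f [f_monic f_irr dvd_fh]] := irreducible_factor_exists size_h.
exists f; split => //; first by rewrite Xl_sub1 dvdp_mull.
by apply: contra l_neq0 => /(root_dvdp dvd_fh); rewrite rootE h1.
Qed.

End IrreducibleFactors.

Lemma horner_exp_pchar (R : comNzRingType) p m (g : {poly R}) x :
  p \in [pchar R] ->
  g.[x] ^+ (p ^ m) = (map_poly (fun a => a ^+ (p ^ m)) g).[x ^+ (p ^ m)].
Proof.
move=> pcharRp; elim: m => [|m IHm]; first by rewrite map_poly_id.
rewrite expnSr !exprM IHm -!(pFrobenius_autE pcharRp) -horner_map.
rewrite -map_poly_comp; congr (_.[_]); apply: eq_map_poly => a /=.
by rewrite pFrobenius_autE -exprM -expnSr.
Qed.

Lemma horner_map_exp_pchar (R S : comNzRingType) (iota : {rmorphism R -> S})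
    p m (g : {poly R}) x :
  p \in [pchar S] ->
  (map_poly iota g).[x] ^+ (p ^ m) =
    (map_poly (iota \o (fun a => a ^+ (p ^ m))) g).[x ^+ (p ^ m)].
Proof.
move=> pcharSp; rewrite horner_exp_pchar // -map_poly_comp_id0.
  by congr (_.[_]); apply: eq_map_poly => a /=; rewrite rmorphXn.
by rewrite expr0n expn_eq0 eqn0Ngt prime_gt0 ?(pcharf_prime pcharSp).
Qed.

Lemma expf_card_exp (F : finFieldType) j (a : F) : a ^+ (#|F| ^ j) = a.
Proof. by elim: j => // j IHj; rewrite expnS exprM expf_card. Qed.

Section Dagger.
Variables (F : finFieldType) (q : nat) (g : {poly F}).
Hypothesis g0_neq0 : g`_0 != 0.

Lemma size_pstar : size (pstar g) = size g.
Proof.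
by rewrite size_scale ?invr_neq0 // size_poly_eq // subnn.
Qed.

Lemma pstar_monic : pstar g \is monic.
Proof.
have g_neq0 : g != 0 by apply: contra_neq g0_neq0 => ->; rewrite coef0.
by rewrite monicE /pstar lead_coefZ lead_coef_poly ?size_poly_gt0 ?subnn ?mulVf.
Qed.

Lemma pdagger_monic : pdagger q g \is monic.
Proof.
have lead1 : fconj q (lead_coef (pstar g)) = 1.
  by rewrite (monicP pstar_monic) /fconj expr1n.
rewrite monicE /pdagger /pconj /map_poly lead_coef_poly -?lead_coefE ?lead1 ?oner_eq0 //.
by rewrite size_poly_gt0 monic_neq0 ?pstar_monic.
Qed.

Lemma size_pdagger : size (pdagger q g) = size g.
Proof.
rewrite -size_pstar /pdagger /pconj /map_poly size_poly_eq // -lead_coefE.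
by rewrite (monicP pstar_monic) /fconj expr1n oner_eq0.
Qed.

End Dagger.

Section ConjugateReciprocal.
Variables (F : finFieldType) (p k : nat).
Hypotheses (p_pr : prime p) (cardF : #|F| = ((p ^ k) ^ 2)%N).
Local Notation Q := (p ^ k)%N.

Variable f : {poly F}.
Hypotheses (f_monic : f \is monic) (f_irr : irreducible_poly f) (f0_neq0 : f`_0 != 0).

Let fI : monic_irreducible_poly f := (f_irr, f_monic).
Local Notation K := {poly %/ f with fI}.
Let toK : {rmorphism F -> K} := qpolyC f.
Let alpha : K := qpolyX f.
Local Notation "g ^K" := (map_poly toK g) (at level 2, format "g ^K").
Local Notation d := (size f).-1.

Lemma pchar_K : p \in [pchar K].
Proof. by apply/(rmorph_pchar toK)/(card_finPcharP (n := k * 2)); rewrite ?expnM. Qed.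

Lemma horner_map_expQ g x : (g^K).[x] ^+ Q = ((pconj Q g)^K).[x ^+ Q].
Proof. by rewrite horner_map_exp_pchar ?pchar_K // /pconj -map_poly_comp. Qed.

Lemma horner_map_expF j g x : (g^K).[x] ^+ (#|F| ^ j) = (g^K).[x ^+ (#|F| ^ j)].
Proof.
rewrite cardF -!expnM horner_map_exp_pchar ?pchar_K //.
by congr (_.[_]); apply: eq_map_poly => a /=; rewrite !expnM -cardF expf_card_exp.
Qed.

Lemma horner_map_alpha g : (g^K).[alpha] = in_qpoly f g.
Proof. by rewrite -[g in RHS]comp_polyXr in_qpoly_comp_horner. Qed.

Lemma root_map_alpha g : root g^K alpha = (f %| g).
Proof.
rewrite /root horner_map_alpha; apply/eqP/idP => [/val_eqP /= | f_dvd_g].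
  by rewrite -Pdiv.IdomainMonic.modpE (mk_monicE fI).
by apply/val_eqP; rewrite /= -Pdiv.IdomainMonic.modpE (mk_monicE fI).
Qed.

Lemma horner_map_val (y : K) : ((y : {poly F})^K).[alpha] = y.
Proof.
rewrite horner_map_alpha; apply: val_inj.
by rewrite /= Pdiv.Ring.rmodp_small // size_mk_monic.
Qed.

Lemma horner_map_pstar g x : x != 0 ->
  ((pstar g)^K).[x] = toK (g`_0)^-1 * x ^+ (size g).-1 * (g^K).[x^-1].
Proof.
move=> x_neq0; rewrite /pstar map_polyZ hornerE -mulrA; congr (_ * _).
set s := size g.
rewrite (@horner_coef_wide _ s); last by rewrite size_map_poly size_poly.
rewrite (@horner_coef_wide _ s _ x^-1) ?size_map_poly // mulr_sumr.
rewrite (reindex_inj rev_ord_inj); apply: eq_bigr => i _ /=.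
have i_lt_s := ltn_ord i.
rewrite !coef_map coef_poly /= ifT; last by lia.
have -> : (s.-1 - (s - i.+1) = i)%N by lia.
rewrite mulrCA; congr (_ * _).
have -> : s.-1 = (s - i.+1 + i)%N by lia.
by rewrite exprD exprVn -mulrA mulfV ?mulr1 // expf_neq0.
Qed.

Lemma root_map_neq0 y : root f^K y -> y != 0.
Proof.
apply: contraTneq => ->; rewrite rootE horner_coef0 coef_map.
by rewrite fmorph_eq0.
Qed.

Lemma root_map_pdagger y : root f^K y -> root (pdagger Q f)^K (y^-1 ^+ Q).
Proof.
move=> fy0; have y_neq0 := root_map_neq0 fy0.
rewrite /root /pdagger -horner_map_expQ horner_map_pstar ?invr_neq0 //.
by rewrite invrK (rootP fy0) mulr0 expr0n expn_eq0 eqn0Ngt prime_gt0.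
Qed.

Lemma root_map_f_alpha : root f^K alpha.
Proof. by rewrite root_map_alpha. Qed.

Lemma expf_card_ext (y : K) : y ^+ (#|F| ^ d) = y.
Proof. by rewrite -card_qfpoly expf_card. Qed.

Lemma deg_leq_frob_fixed t : (0 < t)%N -> alpha ^+ (#|F| ^ t) = alpha -> (d <= t)%N.
Proof.
move=> t_gt0 fix_alpha; have F_gt1 := finNzRing_gt1 F.
have N_gt1 : (1 < #|F| ^ t)%N by rewrite -(expn0 #|F|) ltn_exp2l.
set N := (#|F| ^ t)%N in fix_alpha N_gt1.
have size_XN : size ('X^N - 'X : {poly K}) = N.+1.
  by rewrite size_polyDl ?size_polyXn // size_polyN size_polyX.
have all_fixed : all (root ('X^N - 'X)) (enum K).
  apply/allP => y _; rewrite rootE !hornerE -{1}(horner_map_val y).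
  by rewrite horner_map_expF fix_alpha horner_map_val subrr.
have := max_poly_roots _ all_fixed (enum_uniq K).
rewrite -cardE card_qfpoly size_XN -size_poly_eq0 size_XN ltnS leq_exp2l //.
by apply.
Qed.

Lemma uniq_frob_orbit : uniq [seq alpha ^+ (#|F| ^ j) | j <- iota 0 d].
Proof.
have frob_neq (i j : nat) : (i < j)%N -> (j < d)%N ->
    alpha ^+ (#|F| ^ i) != alpha ^+ (#|F| ^ j).
  move=> lt_ij lt_jd; apply/eqP => eq_ij.
  suff : (d <= i + (d - j))%N by lia.
  apply: deg_leq_frob_fixed; first by lia.
  by rewrite expnD exprM eq_ij -exprM -expnD subnKC ?expf_card_ext // ltnW.
rewrite map_inj_in_uniq ?iota_uniq // => i j; rewrite !mem_iota /= => i_lt_d j_lt_d.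
have [lt_ij | lt_ji | //] := ltngtP i j => eq_ij.
  by have := frob_neq i j lt_ij j_lt_d; rewrite eq_ij eqxx.
by have := frob_neq j i lt_ji i_lt_d; rewrite eq_ij eqxx.
Qed.

Lemma root_map_frob_orbit y : root f^K y -> exists j, y = alpha ^+ (#|F| ^ j).
Proof.
move=> fy0; set rs := [seq alpha ^+ (#|F| ^ j) | j <- iota 0 d].
have roots_rs : all (root f^K) rs.
  apply/allP => _ /mapP[j _ ->]; rewrite rootE -horner_map_expF.
  by rewrite (rootP root_map_f_alpha) expr0n expn_eq0 eqn0Ngt (ltnW (finNzRing_gt1 F)).
suff : y \in rs by case/mapP => j _ ->; exists j.
apply: contraT => y_notin_rs.
have := max_poly_roots (p := f^K) (rs := y :: rs).
rewrite map_poly_eq0 monic_neq0 //= fy0 roots_rs y_notin_rs uniq_frob_orbit.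
rewrite size_map size_iota size_map_poly prednK ?ltnn; first by apply.
by rewrite size_poly_gt0 monic_neq0.
Qed.

Lemma pdagger_fixedP :
  f = pdagger Q f <-> exists2 m, odd m & alpha ^+ (Q ^ m + 1) = 1.
Proof.
have alpha_neq0 := root_map_neq0 root_map_f_alpha.
have d_gt0 : (0 < d)%N by case: f_irr => size_f _; rewrite -ltnS prednK // ltnW.
split => [f_dagger | [m m_odd alpha_m]].
  have := root_map_pdagger root_map_f_alpha.
  rewrite -f_dagger => /root_map_frob_orbit[j alphaVQ].
  (* alpha^-1 = (alpha^-1)^(Q^(2d)) = (alpha^(Q^(2j)))^(Q^(2d-1)) *)
  pose e := ((j + d).*2.-1)%N.
  have e_odd : odd e.
    by rewrite /e -subn1 oddB ?odd_double // double_gt0 addn_gt0 d_gt0 orbT.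
  have alpha_e : alpha ^+ (Q ^ e) = alpha^-1.
    have Q_e : (Q ^ e = #|F| ^ j * Q ^ (d.*2.-1))%N.
      by rewrite cardF -!expnM -expnD; congr (_ ^ _)%N; lia.
    rewrite Q_e exprM -alphaVQ -exprM -expnS prednK ?double_gt0 //.
    by rewrite -muln2 mulnC expnM -cardF expf_card_ext.
  by exists e; rewrite // exprD expr1 alpha_e mulVf.
have alpha_Qm : alpha ^+ (Q ^ m) = alpha^-1.
  by apply: (mulIf alpha_neq0); rewrite -exprSr -addn1 alpha_m mulVf.
have Q_m : (Q ^ m * Q = #|F| ^ m./2.+1)%N.
  rewrite -expnSr cardF -[RHS]expnM; congr (_ ^ _)%N.
  by rewrite -[m in LHS]odd_double_half m_odd; lia.
have : root (pdagger Q f)^K (alpha ^+ (#|F| ^ m./2.+1)).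
  by rewrite -Q_m exprM alpha_Qm root_map_pdagger ?root_map_f_alpha.
rewrite rootE -horner_map_expF expf_eq0 -rootE root_map_alpha => /andP[_ dvd_f].
apply/eqP; rewrite -eqp_monic ?pdagger_monic // -dvdp_size_eqp //.
by rewrite size_pdagger.
Qed.

Lemma alpha_expn_eq1 n : (alpha ^+ n == 1) = (f %| 'X^n - 1).
Proof.
by rewrite -root_map_alpha rmorphB /= map_polyXn rmorph1 rootE !hornerE subr_eq0.
Qed.

Lemma pdagger_fixed_oddpow_neg1 n :
  f %| 'X^n - 1 -> oddpow_neg1 Q n -> f = pdagger Q f.
Proof.
rewrite -alpha_expn_eq1 => /eqP alpha_n [m m_odd /dvdnP[c Qm]].
by apply/pdagger_fixedP; exists m; rewrite // Qm mulnC exprM alpha_n expr1n.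
Qed.

Lemma oddpow_neg1_of_pdagger_fixed l : prime l -> ~~ root f 1 ->
  f %| 'X^l - 1 -> f = pdagger Q f -> oddpow_neg1 Q l.
Proof.
move=> l_pr nroot_f1; rewrite -alpha_expn_eq1 => /eqP alpha_l.
move=> /pdagger_fixedP[m m_odd alpha_m]; exists m => //.
have alpha_neq1 : alpha != 1.
  apply: contra nroot_f1 => /eqP alpha1; have := root_map_f_alpha.
  by rewrite alpha1 -(rmorph1 toK) rootE horner_map fmorph_eq0.
have [e e_prim dvd_el] := prim_order_exists (prime_gt0 l_pr) alpha_l.
have e_neq1 : e != 1%N.
  by apply: contra_neq alpha_neq1 => e1; rewrite -(prim_expr_order e_prim) e1.
move/(prime_nt_dvdP l_pr e_neq1): dvd_el => <-.
by rewrite (prim_order_dvd e_prim) alpha_m.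
Qed.

End ConjugateReciprocal.

Lemma SCRIM_oddpow_neg1 (F : finFieldType) p k n (f : {poly F}) :
  prime p -> #|F| = ((p ^ k) ^ 2)%N -> (0 < n)%N -> oddpow_neg1 (p ^ k) n ->
  f \is monic -> irreducible_poly f -> f %| 'X^n - 1 -> SCRIM (p ^ k) f.
Proof.
move=> p_pr cardF n_gt0 oddpow_n f_monic f_irr dvd_f.
have f0_neq0 := coef0_neq0_dvdp_Xn_sub1 n_gt0 dvd_f.
by split => //; apply: pdagger_fixed_oddpow_neg1 dvd_f oddpow_n.
Qed.

Lemma oddpow_neg1_SCRIM_factors (F : finFieldType) p k l :
  prime p -> (0 < k)%N -> #|F| = ((p ^ k) ^ 2)%N -> prime l -> coprime l (p ^ k) ->
  (forall f : {poly F}, f \is monic -> irreducible_poly f ->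
     f %| 'X^l - 1 -> SCRIM (p ^ k) f) ->
  oddpow_neg1 (p ^ k) l.
Proof.
move=> p_pr k_gt0 cardF l_pr coprime_lQ scrim_l.
have l_neq0 : l%:R != 0 :> F.
  rewrite -(dvdn_pcharf (card_finPcharP (n := k * 2) _ p_pr)) ?expnM //.
  rewrite (dvdn_prime2 p_pr l_pr); apply: contraTneq coprime_lQ => ->.
  by rewrite coprime_pexpr // prime_coprime // dvdnn.
have [f [f_monic f_irr dvd_f nroot_f1]] :=
  Xn_sub1_factor_not_root1 (prime_gt1 l_pr) l_neq0.
have [_ _ f0_neq0 f_fixed] := scrim_l f f_monic f_irr dvd_f.
exact: oddpow_neg1_of_pdagger_fixed l_pr nroot_f1 dvd_f f_fixed.
Qed.

Theorem theorem2p7 (q : nat) (F : finFieldType) (n : nat) :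
  prime_power q -> #|F| = (q ^ 2)%N ->
  odd n -> (0 < n)%N -> coprime n q ->
  let P1 := forall f : {poly F}, f \is monic -> irreducible_poly f ->
              f %| 'X^n - 1 -> SCRIM q f in
  let P2 := forall l : nat, prime l -> (l %| n)%N ->
              forall f : {poly F}, f \is monic -> irreducible_poly f ->
              f %| 'X^l - 1 -> SCRIM q f in
  let P3 := forall l : nat, prime l -> (l %| n)%N ->
              odd (ordmod l (q ^ 2)) && ~~ odd (ordmod l q) in
  (P1 <-> P2) /\ (P2 <-> P3).
Proof.
move=> [p [k [p_pr k_gt0 ->]]] cardF n_odd n_gt0 coprime_nq P1 P2 P3.
have coprime_lQ l : (l %| n)%N -> coprime l (p ^ k) by move/coprime_dvdl; apply.
have P3_iff : P3 <-> forall l, prime l -> (l %| n)%N -> oddpow_neg1 (p ^ k) l.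
  split=> hyp l l_pr dvd_ln; have [to_ordmod of_ordmod] :=
    oddpow_neg1_ordmod l_pr (dvdn_odd dvd_ln n_odd) (coprime_lQ l dvd_ln).
  - exact/of_ordmod/hyp.
  - exact/to_ordmod/hyp.
have P1_of_primes : (forall l, prime l -> (l %| n)%N -> oddpow_neg1 (p ^ k) l) -> P1.
  move=> /(oddpow_neg1_primes n_odd) oddpow_n f.
  exact: SCRIM_oddpow_neg1 p_pr cardF n_gt0 oddpow_n.
have primes_of_P2 : P2 -> forall l, prime l -> (l %| n)%N -> oddpow_neg1 (p ^ k) l.
  move=> scrim_l l l_pr dvd_ln.
  exact: oddpow_neg1_SCRIM_factors (coprime_lQ l dvd_ln) (scrim_l l l_pr dvd_ln).
have P2_of_P1 : P1 -> P2.
  move=> scrim_n l _ dvd_ln f f_monic f_irr dvd_f; apply: scrim_n => //.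
  exact: dvdp_trans dvd_f (dvdp_Xn_sub1 _ dvd_ln).
split; split.
- exact: P2_of_P1.
- by move=> /primes_of_P2 /P1_of_primes.
- by move=> /primes_of_P2 /P3_iff.
- by move=> /P3_iff /P1_of_primes /P2_of_P1.
Qed.
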